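(* Let $G$ be a non-regular simple graph on $n$ vertices, and let $u,v$ be vertices of $G$ with $d_G(u)<d_G(v)$. If $F_k(G)$ is regular for some integer $k$ with $2\le k\le n-2$, then $v$ is adjacent in $G$ to every vertex of $V(G)\setminus\{u,v\}$.
   Context: For a simple graph $G=(V,E)$ on $n$ vertices and an integer $1\le k<n$, the $k$-token graph $F_k(G)$ is the graph whose vertices are all $k$-element subsets of $V$, two such subsets $A,B$ being adjacent whenever their symmetric difference $A\triangle B$ is a pair $\{a,b\}$ with $a$ adjacent to $b$ in $G$. $d_G(x)$ denotes the degree of $x$ in $G$. *)

From mathcomp Require Import all_boot.
Set Implicit Arguments. Unset Strict Implicit. Unset Printing Implicit Defensive.

Definition simple_graph (T : finType) (e : rel T) : Prop :=
  symmetric e /\ irreflexive e.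

Definition deg (T : finType) (e : rel T) (x : T) : nat := #|[set y | e x y]|.

Definition regular_graph (T : finType) (e : rel T) : Prop :=
  forall x y : T, deg e x = deg e y.

Definition token_adj (T : finType) (e : rel T) (A B : {set T}) : bool :=
  [exists a, exists b, e a b && ((A :\: B) :|: (B :\: A) == [set a; b])].

(* Vertices of F_k(G) are the k-subsets; the degree of A in F_k(G). *)
Definition token_deg (T : finType) (e : rel T) (k : nat) (A : {set T}) : nat :=
  #|[set B : {set T} | (#|B| == k) && token_adj e A B]|.

Definition token_regular (T : finType) (e : rel T) (k : nat) : Prop :=
  forall A B : {set T}, #|A| = k -> #|B| = k -> token_deg e k A = token_deg e k B.

From mathcomp Require Import all_boot zify.
Set Implicit Arguments. Unset Strict Implicit. Unset Printing Implicit Defensive.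

(* The degree of a k-set A in F_k(G) is the number of edges of G leaving A.
   Adding a vertex x to a set S not containing it changes that number by
   d(x) - 2|N(x) ∩ S|, so regularity of F_k(G) forces
   d(v) - d(u) = 2 (|N(v) ∩ S| - |N(u) ∩ S|) for every (k-1)-set S avoiding
   u and v.  Since d(u) < d(v), such an S contains a neighbour y of v that is
   not a neighbour of u; exchanging y for a non-neighbour w of v would strictly
   decrease |N(v) ∩ S| - |N(u) ∩ S|, which must stay constant. *)

Section MoveToken.
Variable T : finType.
Implicit Types (A B : {set T}) (a b : T).

Definition move_token A a b : {set T} := b |: (A :\ a).

Lemma setD_move_token A a b :
  a \in A -> b \notin A -> A :\: move_token A a b = [set a].
Proof.
move=> aA bA; apply/setP => x; rewrite !inE.
have [->|_] := eqVneq x a; first by rewrite aA /= orbF andbT; apply: contraNN bA => /eqP <-.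
by case: (x \in A); rewrite ?orbT ?andbF.
Qed.

Lemma move_token_setD A a b :
  a \in A -> b \notin A -> move_token A a b :\: A = [set b].
Proof.
move=> aA bA; apply/setP => x; rewrite !inE.
by have [->|_] := eqVneq x b; [rewrite bA | case: (x \in A); rewrite ?andbF].
Qed.

Lemma card_move_token A a b :
  a \in A -> b \notin A -> #|move_token A a b| = #|A|.
Proof.
move=> aA bA; rewrite cardsU1 (cardsD1 a A) aA in_setD1 (negbTE bA) andbF.
by rewrite addnC.
Qed.

Lemma symdiff_move_token A a b : a \in A -> b \notin A ->
  (A :\: move_token A a b) :|: (move_token A a b :\: A) = [set a; b].
Proof. by move=> aA bA; rewrite setD_move_token ?move_token_setD. Qed.

Lemma symdiff_card2 A B : #|A| = #|B| -> #|(A :\: B) :|: (B :\: A)| = 2 ->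
  exists a b, [/\ a \in A, b \notin A & B = move_token A a b].
Proof.
move=> AB; have cardD : #|A :\: B| = #|B :\: A| by rewrite !cardsD AB setIC.
have disj : (A :\: B) :&: (B :\: A) = set0.
  by apply/setP => x; rewrite !inE; case: (x \in A); rewrite /= ?andbF.
have := cardsUI (A :\: B) (B :\: A); rewrite disj cards0 addn0 -cardD => -> cardAB.
have {}cardAB : #|A :\: B| == 1 by apply/eqP; lia.
have [a defAB] := cards1P cardAB.
have /cards1P[b defBA] : #|B :\: A| == 1 by rewrite -cardD cardAB.
have aA : a \in A by have := set11 a; rewrite -defAB => /setDP[].
have bA : b \notin A by have := set11 b; rewrite -defBA => /setDP[].
by exists a, b; split=> //; rewrite /move_token -defBA -defAB setDDr setDv set0U setUC setIC setID.
Qed.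

Lemma move_token_inj A a b a' b' :
  a \in A -> b \notin A -> a' \in A -> b' \notin A ->
  move_token A a b = move_token A a' b' -> (a, b) = (a', b').
Proof.
move=> aA bA a'A b'A eqB.
have := setD_move_token aA bA; have := move_token_setD aA bA.
by rewrite eqB setD_move_token ?move_token_setD // => /set1_inj-> /set1_inj->.
Qed.

End MoveToken.

Section CutSize.
Variables (T : finType) (e : rel T).
Implicit Types (A S : {set T}) (x y : T).

Definition adj_count x S : nat := \sum_(y in S) e x y.

Definition cut_size A : nat := \sum_(a in A) adj_count a (~: A).

Definition cut_edges A : {set T * T} :=
  [set p | [&& p.1 \in A, p.2 \notin A & e p.1 p.2]].

Lemma card_cut_edges A : #|cut_edges A| = cut_size A.
Proof.
rewrite /cut_size /adj_count pair_big_dep /= -sum1_card big_mkcond [RHS]big_mkcond /=.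
by apply: eq_bigr => p _; rewrite /cut_edges !inE andbA; case: ((p.1 \in A) && _); case: (e _ _).
Qed.

Hypotheses (sym_e : symmetric e) (irr_e : irreflexive e).

Lemma token_deg_cut_size k A : #|A| = k -> token_deg e k A = cut_size A.
Proof.
move=> cardA; rewrite -card_cut_edges /token_deg.
have inj : {in cut_edges A &, injective (fun p => move_token A p.1 p.2)}.
  move=> [a b] [a' b']; rewrite !inE /= => /and3P[aA bA _] /and3P[a'A b'A _].
  exact: move_token_inj.
rewrite -(card_in_imset inj); apply: eq_card => B; rewrite inE.
apply/andP/imsetP => [[/eqP cardB /existsP[a /existsP[b /andP[eab /eqP dAB]]]] | ].
- have ab : a != b by apply: contraTneq eab => ->; rewrite irr_e.
  have [x [y [xA yA defB]]] : exists x y, [/\ x \in A, y \notin A & B = move_token A x y].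
    by apply: symdiff_card2; rewrite ?dAB ?cards2 ?ab // cardA cardB.
  have dxy : [set x; y] = [set a; b] by rewrite -dAB defB symdiff_move_token.
  have xy : x != y by apply: contraNneq yA => <-.
  have xab : x \in [set a; b] by rewrite -dxy set21.
  have yab : y \in [set a; b] by rewrite -dxy set22.
  exists (x, y) => //; rewrite inE /= xA yA /=.
  by move: xy; case/set2P: xab => ->; case/set2P: yab => ->; rewrite ?eqxx // sym_e.
- case=> [[a b]]; rewrite !inE /= => /and3P[aA bA eab] ->; split.
    by rewrite card_move_token ?cardA.
  by apply/existsP; exists a; apply/existsP; exists b; rewrite eab symdiff_move_token ?eqxx.
Qed.

Lemma adj_countU1 x y S : y \notin S -> adj_count x (y |: S) = e x y + adj_count x S.
Proof. exact: big_setU1. Qed.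

Lemma adj_count_setC x y S :
  y \notin S -> adj_count x (~: S) = e x y + adj_count x (~: (y |: S)).
Proof.
move=> yS; rewrite -adj_countU1; last by rewrite !inE eqxx.
by congr adj_count; apply/setP => z; rewrite !inE; case: eqP => // ->.
Qed.

Lemma deg_adj_count x S : deg e x = adj_count x S + adj_count x (~: S).
Proof.
rewrite /deg -sum1_card big_mkcond (bigID [in S]) /=.
by congr (_ + _); apply: eq_big => y; rewrite ?inE // => _; case: (e x y).
Qed.

Lemma cut_sizeU1 x S :
  x \notin S -> cut_size (x |: S) + 2 * adj_count x S = cut_size S + deg e x.
Proof.
move=> xS; rewrite /cut_size big_setU1 //=.
under [X in _ = X + _]eq_bigr => a _ do rewrite (adj_count_setC a xS).
rewrite big_split /= (deg_adj_count x S) (adj_count_setC x xS) irr_e.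
have -> : \sum_(a in S) e a x = adj_count x S.
  by apply: eq_bigr => a _; rewrite sym_e.
lia.
Qed.
End CutSize.

Lemma exists_subset_card (T : finType) (A : {set T}) m :
  m <= #|A| -> exists2 S : {set T}, S \subset A & #|S| = m.
Proof.
case/card_geqP=> s [uniq_s size_s sub_s]; exists [set x in s].
  by apply/subsetP => x; rewrite inE => /sub_s.
by rewrite cardsE (card_uniqP uniq_s).
Qed.

Section RegularTokenGraph.
Variables (T : finType) (e : rel T) (k : nat).
Hypotheses (sym_e : symmetric e) (irr_e : irreflexive e) (reg : token_regular e k).
Implicit Types (S : {set T}) (u v w y : T).

Lemma token_regular_deg_gap u v S : #|S|.+1 = k -> u \notin S -> v \notin S ->
  deg e v + 2 * adj_count e u S = deg e u + 2 * adj_count e v S.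
Proof.
move=> cardS uS vS.
have cardU1 x : x \notin S -> #|x |: S| = k by move=> xS; rewrite cardsU1 xS.
have := reg (cardU1 u uS) (cardU1 v vS).
rewrite !(token_deg_cut_size sym_e irr_e) ?cardU1 //.
have := cut_sizeU1 sym_e irr_e uS; have := cut_sizeU1 sym_e irr_e vS; lia.
Qed.

Lemma exists_private_nbr u v S : #|S|.+1 = k -> u \notin S -> v \notin S ->
  deg e u < deg e v -> exists2 y, y \in S & e v y && ~~ e u y.
Proof.
move=> cardS uS vS ltuv; apply/exists_inP; move: ltuv; apply: contraTT => /exists_inPn noPriv.
have : adj_count e v S <= adj_count e u S.
  by apply: leq_sum => y /noPriv; case: (e v y); case: (e u y).
have := token_regular_deg_gap cardS uS vS; lia.
Qed.

Lemma adj_of_exchange u v w y S : #|S|.+1 = k -> u \notin S -> v \notin S ->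
  w \notin S -> w != u -> w != v -> y \in S -> e v y -> ~~ e u y -> e v w.
Proof.
move=> cardS uS vS wS wu wv yS evy neuy.
set R := S :\ y.
have yR : y \notin R by rewrite setD11.
have wR : w \notin R by rewrite in_setD1 (negbTE wS) andbF.
have defS : S = y |: R by rewrite setD1K.
have cardR : #|w |: R|.+1 = k by rewrite cardsU1 wR -cardS defS cardsU1 yR.
have notinR x : x \notin S -> w != x -> x \notin w |: R.
  by move=> xS wx; rewrite in_setU1 in_setD1 (negbTE xS) andbF orbF eq_sym.
have := token_regular_deg_gap cardR (notinR _ uS wu) (notinR _ vS wv).
rewrite !adj_countU1 //.
have := token_regular_deg_gap cardS uS vS; rewrite defS !adj_countU1 // evy (negbTE neuy).
by case: (e v w); case: (e u w); lia.
Qed.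

End RegularTokenGraph.

Theorem lemma3 (T : finType) (e : rel T) (u v : T) (k : nat) :
  simple_graph e ->
  ~ regular_graph e ->
  deg e u < deg e v ->
  2 <= k <= #|T| - 2 ->
  token_regular e k ->
  forall w : T, w != u -> w != v -> e v w.
Proof.
(* Non-regularity of G is implied by d(u) < d(v). *)
case=> sym_e irr_e _ ltuv /andP[k_ge2 k_le] reg w wu wv.
have [S subS cardS] : exists2 S : {set T}, S \subset ~: [set u; v; w] & #|S| = k.-1.
  apply: exists_subset_card; have := cardsC [set u; v; w].
  have : #|[set u; v; w]| <= 3 by rewrite -setUA cardsU1 cards2; case: (_ \notin _); case: (_ != _).
  lia.
have notinS x : x \in [set u; v; w] -> x \notin S.
  by move=> xuvw; apply: contraL xuvw => /(subsetP subS); rewrite inE.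
have cardS1 : #|S|.+1 = k by rewrite cardS; lia.
have [uS vS wS] : [/\ u \notin S, v \notin S & w \notin S] by split; apply: notinS; rewrite !inE eqxx ?orbT.
have [y yS /andP[evy neuy]] := exists_private_nbr sym_e irr_e reg cardS1 uS vS ltuv.
exact: (adj_of_exchange sym_e irr_e reg cardS1 uS vS wS wu wv yS evy neuy).
Qed.
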